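(* Let $p_n(\mathbf y)$ be a linear sequence of symmetric functions of binomial type in the variables $\mathbf y=(y_1,y_2,\dots)$. Then for every complex number $a$ and every $n\ge0$, $$p_n(a,y_1,y_2,\dots)=\sum_{k=0}^n\binom nk\,p_k(a,0,0,\dots)\,p_{n-k}(y_1,y_2,\dots).$$
   Context: A linear sequence of symmetric functions of binomial type is a sequence of the form $$p_n(\mathbf y)=\sum_{\lambda\vdash n}\frac{n!}{\prod_i\lambda_i!}\Big(\prod_ia_{\lambda_i}\Big)m_\lambda(\mathbf y),$$ where $(a_i)_{i\ge0}$ is a sequence of complex numbers (a quasi-species) with $a_0=1$, $a_1\ne0$, and $m_\lambda$ is the monomial symmetric function. For a species, $a_i$ is the number of structures on an $i$-set, and $p_n$ enumerates enriched functions from $\{1,\dots,n\}$ to $\{y_1,y_2,\dots\}$. For a symmetric function $p$, the expression $p(a,y_1,y_2,\dots)$ denotes $p$ evaluated at the variable list $(a,y_1,y_2,\dots)$, and $p(a,0,0,\dots)$ its evaluation with all variables but the first set to $0$. *)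

From HB Require Import structures.
From mathcomp Require Import all_boot all_order all_algebra.
From mathcomp Require Import complex.
From mathcomp Require Import reals.
Set Implicit Arguments. Unset Strict Implicit. Unset Printing Implicit Defensive.
Import Order.TTheory GRing.Theory Num.Theory.
Local Open Scope ring_scope.

Definition is_partition (n : nat) (l : seq nat) : bool :=
  [&& sorted geq l, all (fun k => 0 < k)%N l & sumn l == n].

Definition cand_seqs (n : nat) : seq (seq nat) :=
  flatten [seq [seq [seq nat_of_ord i | i <- fgraph f]
               | f <- enum {ffun 'I_m -> 'I_n.+1}] | m <- iota 0 n.+1].

Definition partitions (n : nat) : seq (seq nat) :=
  undup [seq l <- cand_seqs n | is_partition n l].

(* monomial symmetric function m_lambda evaluated at the finite list of
   variables x = (x_0, ..., x_{m-1}) : sum of x^alpha over all exponent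
   vectors alpha whose nonzero entries, sorted decreasingly, give lambda. *)
Definition msym (C : comPzRingType) (l : seq nat) (x : seq C) : C :=
  \sum_(al : {ffun 'I_(size x) -> 'I_(sumn l).+1}
         | sort geq [seq k <- [seq nat_of_ord (al i) | i <- enum 'I_(size x)]
                    | (0 < k)%N] == l)
    \prod_(i < size x) x`_i ^+ al i.

(* linear sequence of symmetric functions of binomial type attached to the
   quasi-species a, evaluated at the finite list of variables x:
   p_n(x) = sum_{lambda |- n} n!/prod lambda_i! * prod a_{lambda_i} * m_lambda(x) *)
Definition pbin (C : fieldType) (a : nat -> C) (n : nat) (x : seq C) : C :=
  \sum_(l <- partitions n)
     (n`!%:R / (\prod_(i <- l) i`!)%:R) * (\prod_(i <- l) a i) * msym l x.

From HB Require Import structures.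
From mathcomp Require Import all_boot all_order all_algebra.
From mathcomp Require Import complex.
From mathcomp Require Import reals.
From mathcomp Require Import zify ring.
Set Implicit Arguments. Unset Strict Implicit. Unset Printing Implicit Defensive.
Import Order.TTheory GRing.Theory Num.Theory.

(* Let A(t) = sum_j a_j t^j / j!.  Expanding m_lambda into monomials x^alpha,
   the coefficient n!/prod lambda_i! * prod a_(lambda_i) becomes
   n! * prod_i a_(alpha_i) / alpha_i!, so p_n(x) = n! [t^n] prod_i A(x_i t).
   This generating function is multiplicative in the variable list, hence
   p_n(x ++ y) = sum_k C(n, k) p_k(x) p_(n-k)(y); and since a_0 = 1, a zero
   variable contributes the factor A(0) = 1.  Truncating A at degree n keeps
   all coefficients of degree at most n, so polynomials suffice. *)

Definition exponent_partition m B (al : {ffun 'I_m -> 'I_B}) : seq nat :=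
  sort geq [seq k <- [seq nat_of_ord (al i) | i <- enum 'I_m] | (0 < k)%N].

Section ExponentPartition.

Variables m B : nat.
Implicit Type al : {ffun 'I_m -> 'I_B}.

Lemma big_exponent_partition (R : Type) (idx : R) (op : Monoid.com_law idx)
    al (F : nat -> R) :
  F 0%N = idx ->
  \big[op/idx]_(j <- exponent_partition al) F j = \big[op/idx]_(i < m) F (al i).
Proof.
move=> F0; rewrite /exponent_partition (perm_big _ (permEl (perm_sort _ _))).
rewrite big_filter big_mkcond big_map big_enum /=.
by apply: eq_bigr => i _; case: (al i) => [[|k] ?] /=; rewrite ?F0.
Qed.

Lemma sumn_exponent_partition al :
  sumn (exponent_partition al) = (\sum_(i < m) al i)%N.
Proof. by rewrite sumnE (big_exponent_partition addn _ (F := fun j => j)). Qed.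

Lemma exponent_le_sumn al i : (al i <= sumn (exponent_partition al))%N.
Proof. by rewrite sumn_exponent_partition (bigD1 i) //= leq_addr. Qed.

Lemma size_le_sumn (s : seq nat) : all (fun k => 0 < k)%N s -> (size s <= sumn s)%N.
Proof. by elim: s => //= k s IH /andP[k_gt0 /IH]; lia. Qed.

Lemma mem_le_sumn (s : seq nat) k : k \in s -> (k <= sumn s)%N.
Proof. by elim: s => //= j s IH; rewrite inE => /orP[/eqP-> | /IH]; lia. Qed.

Lemma mem_cand_seqs n (l : seq nat) :
  (size l <= n)%N -> all (fun k => k <= n)%N l -> l \in cand_seqs n.
Proof.
move=> size_l le_l; apply/flatten_mapP; exists (size l); first by rewrite mem_iota.
apply/mapP; exists [ffun i : 'I_(size l) => (inord (nth 0%N l i) : 'I_n.+1)].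
  by rewrite mem_enum.
rewrite -codom_ffun codomE -map_comp (eq_map (g := nth 0%N l \o val)); last first.
  by move=> i /=; rewrite ffunE inordK // ltnS (allP le_l) // mem_nth.
by rewrite map_comp val_enum_ord -/(mkseq _ _) mkseq_nth.
Qed.

Lemma mem_partitions_exponent_partition n al :
  (exponent_partition al \in partitions n) = ((\sum_(i < m) al i)%N == n).
Proof.
rewrite mem_undup mem_filter -sumn_exponent_partition.
apply/andP/idP => [[/and3P[_ _ //]] | /eqP sum_n].
have pos : all (fun k => 0 < k)%N (exponent_partition al).
  by rewrite all_sort filter_all.
split.
  by rewrite /is_partition pos sum_n eqxx sort_sorted // => i j; apply: leq_total.
apply: mem_cand_seqs; first by rewrite -sum_n size_le_sumn.
by apply/allP => k /mem_le_sumn; rewrite sum_n.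
Qed.

End ExponentPartition.

Local Open Scope ring_scope.

Lemma msym_exponents (C : comPzRingType) (l : seq nat) (x : seq C) B :
  (sumn l <= B)%N ->
  msym l x = \sum_(al : {ffun 'I_(size x) -> 'I_B.+1} | exponent_partition al == l)
               \prod_(i < size x) x`_i ^+ al i.
Proof.
move=> le_lB; have le_l1B : ((sumn l).+1 <= B.+1)%N by [].
rewrite (reindex_onto
    (fun al : {ffun 'I_(size x) -> 'I_(sumn l).+1} =>
       [ffun i => widen_ord le_l1B (al i)])
    (fun al : {ffun 'I_(size x) -> 'I_B.+1} => [ffun i => inord (al i)])) /=;
  last first.
  move=> al /eqP al_l; apply/ffunP => i; rewrite !ffunE; apply/val_inj => /=.
  by rewrite inordK // ltnS -al_l exponent_le_sumn.
apply: eq_big => [al|al _]; last by apply: eq_bigr => i _; rewrite ffunE.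
have -> : [ffun i => inord ([ffun i0 => widen_ord le_l1B (al i0)] i)] = al.
  by apply/ffunP => i; rewrite !ffunE /= inord_val.
rewrite eqxx andbT /exponent_partition; congr (sort _ _ == _); congr filter.
by apply: eq_map => i; rewrite ffunE.
Qed.

Lemma sum_seq_if_eq (V : nmodType) (T : eqType) (s : seq T) (t : T) (G : T -> V) :
  uniq s -> \sum_(u <- s) (if t == u then G u else 0) = if t \in s then G t else 0.
Proof.
elim: s => [|u s IH] /=; first by rewrite big_nil.
case/andP=> u_notin_s uniq_s; rewrite big_cons IH // inE.
by case: (t =P u) => [->|_] /=; rewrite ?add0r // (negbTE u_notin_s) addr0.
Qed.

Section BinomialType.

Variables (C : fieldType) (a : nat -> C).
Hypothesis a0 : a 0%N = 1.

Definition egf_poly (B : nat) (c : C) : {poly C} :=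
  \poly_(j < B.+1) (a j * c ^+ j / j`!%:R).

Definition gen_poly (B : nat) (x : seq C) : {poly C} :=
  \prod_(c <- x) egf_poly B c.

Lemma pbin_exponents n B (x : seq C) :
  (n <= B)%N ->
  pbin a n x =
    \sum_(al : {ffun 'I_(size x) -> 'I_B.+1} | (\sum_(i < size x) al i)%N == n)
      n`!%:R * \prod_(i < size x) (a (al i) * x`_i ^+ al i / (al i)`!%:R).
Proof.
move=> le_nB; rewrite /pbin (eq_big_seq (fun l =>
    \sum_(al : {ffun 'I_(size x) -> 'I_B.+1})
      if exponent_partition al == l then
        n`!%:R / (\prod_(i <- l) i`!)%:R * \prod_(i <- l) a i *
        \prod_(i < size x) x`_i ^+ al i
      else 0)); last first.
  move=> l; rewrite mem_undup mem_filter => /andP[/and3P[_ _ /eqP sum_l] _].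
  by rewrite (@msym_exponents _ _ _ B) ?sum_l // mulr_sumr big_mkcond.
rewrite exchange_big /= [RHS]big_mkcond /=; apply: eq_bigr => al _.
rewrite sum_seq_if_eq ?undup_uniq // mem_partitions_exponent_partition.
case: eqP => // _.
rewrite (big_exponent_partition muln) // (big_exponent_partition *%R) //.
rewrite -!mulrA natr_prod -prodfV -!big_split /=; congr (_ * _).
by apply: eq_bigr => i _; rewrite mulrC.
Qed.

Lemma coef_gen_poly B (x : seq C) n :
  (gen_poly B x)`_n =
    \sum_(al : {ffun 'I_(size x) -> 'I_B.+1} | (\sum_(i < size x) al i)%N == n)
      \prod_(i < size x) (a (al i) * x`_i ^+ al i / (al i)`!%:R).
Proof.
rewrite /gen_poly (big_nth 0) big_mkord.
under eq_bigr do rewrite /egf_poly poly_def.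
rewrite bigA_distr_bigA /= coef_sum [RHS]big_mkcond; apply: eq_bigr => al _.
under eq_bigr do rewrite -mul_polyC.
rewrite big_split /= -rmorph_prod -(big_morph _ (exprD 'X) (expr0 'X)).
by rewrite coefCM coefXn eq_sym; case: eqP; rewrite ?mulr1 ?mulr0.
Qed.

Lemma pbin_gen_poly n B (x : seq C) :
  (n <= B)%N -> pbin a n x = n`!%:R * (gen_poly B x)`_n.
Proof. by move=> le_nB; rewrite (pbin_exponents _ le_nB) coef_gen_poly mulr_sumr. Qed.

Lemma gen_poly_cat B (x y : seq C) :
  gen_poly B (x ++ y) = gen_poly B x * gen_poly B y.
Proof. exact: big_cat. Qed.

Lemma gen_poly_nseq0 B k : gen_poly B (nseq k 0) = 1.
Proof.
rewrite /gen_poly big_nseq; elim: k => //= k ->; rewrite mulr1.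
apply/polyP=> j; rewrite coef_poly coefC.
case: j => [|j] /=; first by rewrite a0 expr0 mulr1 invr1 mulr1.
by rewrite expr0n mulr0 mul0r if_same.
Qed.

Lemma pbin_cat n (x y : seq C) :
  pbin a n (x ++ y) =
    \sum_(k < n.+1) 'C(n, k)%:R * pbin a k x * pbin a (n - k) y.
Proof.
rewrite (pbin_gen_poly _ (leqnn n)) gen_poly_cat coefM mulr_sumr.
apply: eq_bigr => k _; have le_kn : (k <= n)%N by rewrite -ltnS.
rewrite (pbin_gen_poly _ le_kn) (pbin_gen_poly _ (leq_subr k n)).
by rewrite -(bin_fact le_kn) !natrM; ring.
Qed.

Lemma pbin_cat_nseq0 n (x : seq C) k : pbin a n (x ++ nseq k 0) = pbin a n x.
Proof. by rewrite !(pbin_gen_poly _ (leqnn n)) gen_poly_cat gen_poly_nseq0 mulr1. Qed.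

End BinomialType.

Local Open Scope complex_scope.

Theorem mainTheorem5 (R : realType) (a : nat -> R[i])
  (ha0 : a 0%N = 1) (ha1 : a 1%N != 0)
  (c : R[i]) (n : nat) (y : seq R[i]) :
  pbin a n (c :: y) =
  \sum_(k < n.+1)
     'C(n, k)%:R * pbin a k (c :: nseq (size y) 0) * pbin a (n - k) y.
Proof.
(* the identity holds for every a with a_0 = 1 *)
rewrite -cat1s pbin_cat //; apply: eq_bigr => k _.
by rewrite -(pbin_cat_nseq0 ha0 k [:: c] (size y)).
Qed.
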